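(* For an integer $r\ge 5$, let $freq_r(\mathrm{FL})$ and $freq_r(\mathrm{1P})$ denote the number of $7$-card subsets of the $4r$-card deck (defined in the context) that contain a flush, respectively a one-pair hand. Then: (i) there exists $N$ such that $freq_r(\mathrm{FL}) > freq_r(\mathrm{1P})$ for all $r \ge N$ (flushes eventually rank below one-pair hands in the frequency ranking); and (ii) if $r\ge 5$ and $freq_r(\mathrm{FL}) > freq_r(\mathrm{1P})$, then $r \ge 307$.
   Context: Fix an integer $r\ge 5$. The deck has $4r$ cards: each card has one of $4$ suits and one of $r$ ranks $1,2,\dots,r$, each (suit, rank) pair occurring exactly once. Let $S_r$ be the set of all $7$-card subsets of this deck (so $|S_r|=\binom{4r}{7}$). A $5$-card set is a flush (FL) if all five cards have the same suit. A $5$-card set contains a one-pair (1P) if two of its cards have the same rank. For a hand type $h$ and $s\in S_r$, say $h\in s$ if some $5$-card subset of $s$ is of type $h$ (counting is inclusive: a $5$-card set may be of several types simultaneously). Define $freq_r(h)=|\{s\in S_r : h\in s\}|$. The frequency ranking places type $h_0$ above $h_1$ exactly when $freq_r(h_0)<freq_r(h_1)$. *)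

From mathcomp Require Import all_boot.
Set Implicit Arguments. Unset Strict Implicit. Unset Printing Implicit Defensive.

(* A card of the 4r-card deck: (suit, rank); suits 'I_4, ranks 'I_r
   (rank i : 'I_r stands for the rank i+1 in {1,...,r}). *)
Definition card (r : nat) : finType := ('I_4 * 'I_r)%type.

Definition is_flush (r : nat) (h : {set card r}) : bool :=
  (#|h| == 5) && [exists su : 'I_4, [forall c in h, c.1 == su]].

Definition is_onepair (r : nat) (h : {set card r}) : bool :=
  (#|h| == 5) &&
  [exists c1 in h, exists c2 in h, (c1 != c2) && (c1.2 == c2.2)].

Definition has_type (r : nat) (P : {set card r} -> bool) (s : {set card r}) : bool :=
  [exists h : {set card r}, (h \subset s) && P h].

Definition freq (r : nat) (P : {set card r} -> bool) : nat :=
  #|[set s : {set card r} | (#|s| == 7) && has_type P s]|.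

Definition freqFL (r : nat) : nat := freq (@is_flush r).
Definition freq1P (r : nat) : nat := freq (@is_onepair r).

From Pilot Require Import Defs.
From Stdlib Require Import ZArith Lia.
From mathcomp Require Import all_boot zify.
Set Implicit Arguments. Unset Strict Implicit. Unset Printing Implicit Defensive.

(* A 7-card hand contains a one-pair exactly when two of its cards share a
   rank, so freq_r(1P) = C(4r,7) - 4^7 C(r,7): a hand with distinct ranks is
   the graph of a partial function from ranks to suits defined at 7 ranks.
   It contains a flush exactly when some suit holds at least 5 of its cards,
   and as 5 + 5 > 7 that suit is unique, so
   freq_r(FL) = 4 (C(r,5) C(3r,2) + C(r,6) C(3r,1) + C(r,7)).
   Thus 7! (freq_r(FL) - freq_r(1P)) is an integer polynomial of degree 7 in r;
   expanded around r = 307 all its coefficients are positive, and evaluating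
   it shows that it is nonpositive for r = 5, ..., 306. *)

Lemma card_set_exists_uniq (I T : finType) (Q : pred T) (P : I -> pred T) :
  (forall x i j, Q x -> P i x -> P j x -> i = j) ->
  #|[set x | Q x && [exists i, P i x]]| = \sum_i #|[set x | Q x && P i x]|.
Proof.
move=> uniqP; rewrite -(sum1dep_card (fun y => Q y && [exists j, P j y])).
under [RHS]eq_bigr => i _ do rewrite -(sum1dep_card (fun x => Q x && P i x)).
rewrite (exchange_big_dep (fun y => Q y && [exists j, P j y])) /=; last first.
  by move=> i x _ /andP[Qx Pix]; rewrite Qx; apply/existsP; exists i.
apply: eq_bigr => x /andP[Qx /existsP[i Pix]].
rewrite (big_pred1 i) // => j /=; rewrite Qx.
by apply/idP/eqP => [Pjx | ->//]; exact: uniqP Qx Pjx Pix.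
Qed.

Section SetCounting.
Variable T : finType.
Implicit Types A B C D s : {set T}.

Lemma exists_card_between A B k : A \subset B -> #|A| <= k <= #|B| ->
  exists C : {set T}, [/\ A \subset C, C \subset B & #|C| = k].
Proof.
move=> AB /andP[Ak kB].
have : 0 < #|[set D : {set T} | D \subset B :\: A & #|D| == k - #|A|]|.
  by rewrite cards_draws bin_gt0 cardsD (setIidPr AB) leq_sub2r.
case/card_gt0P => D; rewrite inE => /andP[DBA /eqP Dk].
have AD0 : A :&: D = set0.
  apply/disjoint_setI0; rewrite disjoint_sym disjoints_subset.
  by rewrite (subset_trans DBA) // setDE subsetIr.
exists (A :|: D); split; first exact: subsetUl.
  by rewrite subUset AB (subset_trans DBA) ?subsetDl.
by rewrite cardsU AD0 cards0 subn0 Dk subnKC.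
Qed.

Lemma setUIl_subset A B C : B \subset A -> C \subset ~: A -> (B :|: C) :&: A = B.
Proof.
move=> BA CA; rewrite setIUl (setIidPl BA) (disjoint_setI0 _) ?setU0 //.
by rewrite disjoints_subset.
Qed.

Lemma card_draws_meet A n k : k <= n ->
  #|[set s : {set T} | (#|s| == n) && (#|s :&: A| == k)]| =
  'C(#|A|, k) * 'C(#|~: A|, n - k).
Proof.
move=> le_kn; rewrite -!cards_draws -cardsX.
pose parts s := (s :&: A, s :&: ~: A).
have parts_inj : injective parts.
  by move=> s1 s2 [E1 E2]; rewrite -(setID s1 A) -(setID s2 A) !setDE E1 E2.
rewrite -(card_imset _ parts_inj); apply: eq_card => -[B C].
rewrite !inE; apply/imsetP/idP => [[s] | ].
  rewrite inE => /andP[/eqP sn /eqP sk] [-> ->].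
  by rewrite !subsetIr sk -sn -(cardsID A s) setDE sk addKn !eqxx.
rewrite /= -andbA => /and4P[BA /eqP Bk CA /eqP Ck].
have BCA : (B :|: C) :&: A = B := setUIl_subset BA CA.
have BCAc : (B :|: C) :&: ~: A = C by rewrite setUC setUIl_subset ?setCK.
exists (B :|: C); last by rewrite /parts BCA BCAc.
by rewrite inE -(cardsID A) setDE BCA BCAc Bk Ck subnKC // !eqxx.
Qed.

Lemma card_draws_meet_ge A n m :
  #|[set s : {set T} | (#|s| == n) && (m <= #|s :&: A|)]| =
  \sum_(m <= k < n.+1) 'C(#|A|, k) * 'C(#|~: A|, n - k).
Proof.
pose P (k : 'I_n.+1) s := (#|s :&: A| == k) && (m <= k).
have -> : [set s : {set T} | (#|s| == n) && (m <= #|s :&: A|)] =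
          [set s : {set T} | (#|s| == n) && [exists k, P k s]].
  apply/setP => s; rewrite !inE; case: eqP => //= sn.
  apply/idP/existsP => [m_le | [k /andP[/eqP -> //]]].
  have lt_sn : #|s :&: A| < n.+1 by rewrite ltnS -sn subset_leq_card ?subsetIl.
  by exists (Ordinal lt_sn); rewrite /P eqxx.
rewrite (@card_set_exists_uniq _ _ (fun s => #|s| == n) P); last first.
  move=> s i j _ /andP[/eqP si _] /andP[/eqP sj _].
  by apply: val_inj; rewrite /= -si -sj.
rewrite big_geq_mkord [RHS]big_mkcond; apply: eq_bigr => k _ /=.
case: ifP => mk; last by apply: eq_card0 => s; rewrite !inE /P mk !andbF.
rewrite -card_draws_meet; last by rewrite -ltnS.
by apply: eq_card => s; rewrite !inE /P mk andbT.
Qed.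

End SetCounting.

Section Deck.
Variables S R : finType.
Implicit Types (s : {set S * R}) (x : S).

Definition suit x : {set S * R} := setX [set x] [set: R].

Lemma card_suit x : #|suit x| = #|R|.
Proof. by rewrite cardsX cards1 cardsT mul1n. Qed.

Lemma card_suitC x : #|~: suit x| = (#|S| - 1) * #|R|.
Proof. by rewrite mulnBl mul1n -card_prod -(cardsC (suit x)) card_suit addKn. Qed.

Lemma card_draws_suit_ge n m : n < m + m ->
  #|[set s : {set S * R} | (#|s| == n) && [exists x, m <= #|s :&: suit x|]]| =
  #|S| * \sum_(m <= k < n.+1) 'C(#|R|, k) * 'C((#|S| - 1) * #|R|, n - k).
Proof.
move=> n_lt_2m.
rewrite (@card_set_exists_uniq _ _ (fun s => #|s| == n)
           (fun x s => m <= #|s :&: suit x|)); last first.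
  move=> s x y /eqP sn mx my; apply/eqP; apply: contraLR n_lt_2m => xy.
  have sub_x : s :&: suit x \subset s :\: suit y.
    apply/subsetP => c; rewrite !inE => /and3P[cs /eqP cx _].
    by rewrite cs andbT; apply: contra xy => /andP[/eqP <- _]; rewrite cx.
  rewrite -leqNgt -sn -(cardsID (suit y) s).
  exact: leq_add my (leq_trans mx (subset_leq_card sub_x)).
rewrite -sum_nat_const; apply: eq_bigr => x _.
by rewrite card_draws_meet_ge card_suit card_suitC.
Qed.

Definition rank_collision s :=
  [exists c1 in s, exists c2 in s, (c1 != c2) && (c1.2 == c2.2)].

Lemma rank_collisionPn s : reflect {in s &, injective snd} (~~ rank_collision s).
Proof.
apply: (iffP idP) => [no_coll c1 c2 c1s c2s eq_rank | inj].
  apply/eqP; apply: contraNT no_coll => c12.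
  apply/existsP; exists c1; rewrite c1s; apply/existsP; exists c2.
  by rewrite c2s c12 eq_rank /=.
apply/existsP => -[c1 /andP[c1s /existsP[c2 /andP[c2s /andP[c12 /eqP eq_rank]]]]].
by rewrite (inj _ _ c1s c2s eq_rank) eqxx in c12.
Qed.

Definition pgraph (f : {ffun R -> option S}) : {set S * R} :=
  [set c | f c.2 == Some c.1].

Lemma pgraph_inj : injective pgraph.
Proof.
move=> f g eq_fg; apply/ffunP => i.
have mem_pgraph h x : ((x, i) \in pgraph h) = (h i == Some x) by rewrite inE.
have eq_some x : (f i == Some x) = (g i == Some x) by rewrite -!mem_pgraph eq_fg.
case: (f i) (g i) eq_some => [x|] [y|] eq_some //.
- by apply/eqP; rewrite eq_some.
- by have := eq_some x; rewrite eqxx.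
- by have := eq_some y; rewrite eqxx.
Qed.

Lemma pgraph_rank_inj f : {in pgraph f &, injective snd}.
Proof.
move=> [x i] [y j]; rewrite !inE /= => /eqP fi /eqP fj eq_ij.
by move: fj; rewrite -eq_ij fi => -[->].
Qed.

Lemma card_pgraph f : #|pgraph f| = #|[set i | f i != None]|.
Proof.
rewrite -(card_in_imset (@pgraph_rank_inj f)); apply: eq_card => i.
rewrite !inE; apply/imsetP/idP => [[c] | ].
  by rewrite inE => /eqP fc ->; rewrite fc.
by case fi: (f i) => [x|] // _; exists (x, i); rewrite // inE fi.
Qed.

Lemma card_ffun_support k :
  #|[set f : {ffun R -> option S} | #|[set i | f i != None]| == k]| =
  'C(#|R|, k) * #|S| ^ k.
Proof.
have support_pffun (f : {ffun R -> option S}) (D : {set R}) :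
    (f \in pffun_on None D (predC1 None)) = (D == [set i | f i != None]).
  apply/pffun_onP/eqP => [[/subsetP sD fD] | ->].
    apply/setP => i; rewrite inE; apply/idP/idP => [iD | ]; last exact: sD.
    exact: fD (image_f f iD).
  split; first by apply/subsetP => i; rewrite !inE.
  by move=> o /imageP[i]; rewrite inE => fi ->.
pose P (D : {set R}) (f : {ffun R -> option S}) :=
  (#|D| == k) && (f \in pffun_on None D (predC1 None)).
transitivity #|[set f | predT f && [exists D, P D f]]|.
  apply: eq_card => f; rewrite !inE; apply/eqP/existsP => [fk | [D]].
    by exists [set i | f i != None]; rewrite /P support_pffun fk !eqxx.
  by rewrite /P support_pffun => /andP[/eqP Dk /eqP <-].
rewrite card_set_exists_uniq; last first.
  move=> f D E _ /andP[_]; rewrite support_pffun => /eqP ->.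
  by case/andP=> _; rewrite support_pffun => /eqP.
rewrite -card_draws -sum_nat_cond_const [RHS]big_mkcond; apply: eq_bigr => D _.
case: ifP => Dk; last by apply: eq_card0 => f; rewrite !inE /P Dk.
transitivity #|pffun_on None D (predC1 (None : option S))|.
  by apply: eq_card => f; rewrite !inE /P Dk.
by rewrite card_pffun_on cardC1 card_option (eqP Dk).
Qed.

Lemma card_draws_rank_inj k :
  #|[set s : {set S * R} | (#|s| == k) && ~~ rank_collision s]| =
  'C(#|R|, k) * #|S| ^ k.
Proof.
rewrite -card_ffun_support -(card_imset _ pgraph_inj); apply: eq_card => s.
rewrite !inE; apply/andP/imsetP => [[/eqP sk /rank_collisionPn inj_s] | [f]].
  pose f := [ffun i => [pick x | (x, i) \in s]].
  have pgraph_f : pgraph f = s.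
    apply/setP => -[x i]; rewrite inE /= ffunE.
    case: pickP => [y ys | no_x]; last by rewrite no_x.
    apply/eqP/idP => [[<-] // | xs].
    by have [->] := inj_s _ _ ys xs erefl.
  by exists f; rewrite // inE -card_pgraph pgraph_f sk.
rewrite inE => /eqP fk ->; split; first by rewrite card_pgraph fk.
exact/rank_collisionPn/pgraph_rank_inj.
Qed.

End Deck.

Lemma has_type_flush r (s : {set Defs.card r}) :
  has_type (@is_flush r) s = [exists x, 5 <= #|s :&: suit 'I_r x|].
Proof.
apply/existsP/existsP => [[h /andP[hs /andP[/eqP h5 /existsP[x /forallP hx]]]] |
                          [x s5]].
  exists x; rewrite -h5 subset_leq_card // subsetI hs; apply/subsetP => c ch.
  by have := hx c; rewrite ch !inE andbT.
have [h [_ hsx h5]] : exists h : {set Defs.card r},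
    [/\ set0 \subset h, h \subset s :&: suit 'I_r x & #|h| = 5].
  by apply: exists_card_between; rewrite ?sub0set // cards0.
exists h; rewrite (subset_trans hsx (subsetIl _ _)) /is_flush h5 eqxx /=.
apply/existsP; exists x; apply/forallP => c; apply/implyP => ch.
by have := subsetP hsx c ch; rewrite !inE => /andP[_ /andP[]].
Qed.

Lemma has_type_onepair r (s : {set Defs.card r}) : 5 <= #|s| ->
  has_type (@is_onepair r) s = rank_collision s.
Proof.
move=> s_ge5; apply/existsP/existsP => [[h /andP[hs /andP[_ /existsP[c1]]]] |
                                        [c1 /andP[c1s /existsP[c2 /andP[c2s coll]]]]].
  case/andP=> c1h /existsP[c2 /andP[c2h coll]].
  exists c1; rewrite (subsetP hs c1 c1h); apply/existsP; exists c2.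
  by rewrite (subsetP hs c2 c2h).
have c12s : [set c1; c2] \subset s by rewrite subUset !sub1set c1s c2s.
have [h [c12h hs h5]] : exists h : {set Defs.card r},
    [/\ [set c1; c2] \subset h, h \subset s & #|h| = 5].
  by apply: exists_card_between; rewrite // cards2 (andP coll).1.
exists h; rewrite hs /is_onepair h5 eqxx /=.
have /andP[c1h c2h] : (c1 \in h) && (c2 \in h) by rewrite -!sub1set -subUset.
by apply/existsP; exists c1; rewrite c1h; apply/existsP; exists c2; rewrite c2h.
Qed.

Lemma freqFL_sum r : freqFL r = 4 * \sum_(5 <= k < 8) 'C(r, k) * 'C(3 * r, 7 - k).
Proof.
have := @card_draws_suit_ge 'I_4 'I_r 7 5 erefl; rewrite !card_ord => <-.
by apply: eq_card => s; rewrite !inE has_type_flush.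
Qed.

Lemma freq1P_add_rank_inj r : freq1P r + 'C(r, 7) * 4 ^ 7 = 'C(4 * r, 7).
Proof.
have := card_draws_rank_inj 'I_4 'I_r 7; rewrite !card_ord => <-.
have -> : 'C(4 * r, 7) = #|[set s : {set Defs.card r} | #|s| == 7]|.
  by rewrite card_draws card_prod !card_ord.
rewrite -(cardsID [set s | rank_collision s] [set s : {set Defs.card r} | #|s| == 7]).
congr (_ + _); apply: eq_card => s; rewrite !inE; last by rewrite andbC.
by case: eqP => // s7; rewrite has_type_onepair ?s7.
Qed.

Section GapPolynomial.
Local Open Scope Z_scope.

Fixpoint zffact (x : Z) (k : nat) : Z :=
  if k is k'.+1 then zffact x k' * (x - Z.of_nat k') else 1.

Lemma zffact_nat n k : Z.of_nat (n ^_ k) = zffact (Z.of_nat n) k.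
Proof.
elim: k => [|k IH] //=; rewrite ffactnSr Nat2Z.inj_mul IH.
case: (leqP k n) => [le_kn | lt_nk]; first by rewrite Nat2Z.inj_sub //; apply/leP.
by rewrite -IH ffact_small.
Qed.

Definition gap (x : Z) : Z :=
  4 ^ 7 * zffact x 7
  + 4 * (21 * zffact x 5 * zffact (3 * x) 2 + 21 * zffact x 6 * x + zffact x 7)
  - zffact (4 * x) 7.

Lemma gap_freq r :
  gap (Z.of_nat r) = Z.of_nat 7`! * (Z.of_nat (freqFL r) - Z.of_nat (freq1P r)).
Proof.
have bin_Z n k : zffact (Z.of_nat n) k = Z.of_nat ('C(n, k) * k`!).
  by rewrite bin_ffact zffact_nat.
rewrite /gap.
have -> : 3 * Z.of_nat r = Z.of_nat (3 * r) by lia.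
have -> : 4 * Z.of_nat r = Z.of_nat (4 * r) by lia.
have := f_equal Z.of_nat (freq1P_add_rank_inj r).
rewrite !bin_Z freqFL_sum big_ltn // big_ltn // big_nat1 !subSS !subn0 bin1 bin0 !factS fact0.
lia.
Qed.

Lemma freq1P_lt_freqFL r : (freq1P r < freqFL r)%N <-> 0 < gap (Z.of_nat r).
Proof. rewrite gap_freq !factS fact0; lia. Qed.

Lemma gap_shift_pos t : 0 <= t -> 0 < gap (307 + t).
Proof.
move=> t_ge0.
have -> : gap (307 + t) = 547571597073056640 + t * (693778441961310912
    + t * (13512699882631768 + t * (110325621128716 + t * (481138475440
    + t * (1181004328 + t * (1546552 + t * 844)))))).
  by rewrite /gap; cbn [zffact Z.of_nat Pos.of_succ_nat Pos.succ]; ring.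
have horner_step a p : 0 <= a -> 0 <= p -> 0 <= a + t * p.
  by move=> a_ge0 p_ge0; apply: Z.add_nonneg_nonneg; last exact: Z.mul_nonneg_nonneg.
apply: Z.add_pos_nonneg; first lia.
apply: Z.mul_nonneg_nonneg => //.
do 6 (apply horner_step; first lia).
lia.
Qed.

Lemma gap_nonpos_below_307 n : (5 <= n < 307)%N -> gap (Z.of_nat n) <= 0.
Proof.
move=> n_range.
have gap_small : all (fun m => gap (Z.of_nat m) <=? 0) (iota 5 302) by vm_compute.
by apply/Z.leb_le; apply: (allP gap_small); rewrite mem_iota.
Qed.

End GapPolynomial.

Theorem fact1 :
  (exists N : nat, forall r : nat, N <= r -> freq1P r < freqFL r) /\
  (forall r : nat, 5 <= r -> freq1P r < freqFL r -> 307 <= r).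
Proof.
split.
  exists 307 => r r_ge; apply/freq1P_lt_freqFL.
  have -> : Z.of_nat r = (307 + (Z.of_nat r - 307))%Z by lia.
  by apply: gap_shift_pos; lia.
move=> r r_ge5 /freq1P_lt_freqFL gap_pos; rewrite leqNgt; apply/negP => r_lt.
have := @gap_nonpos_below_307 r; rewrite r_ge5 r_lt; lia.
Qed.
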